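(* Let $d=1$, $\hbar>0$, $M>0$, $x,x_0\in\mathbb{R}$, $t_0<t$, and let $m$ be a positive Borel measure on $\mathbb{R}$ with $\int_{\mathbb{R}}e^{C|\alpha|}dm(\alpha)<\infty$ for all $C>0$ and $m(\mathbb{R}\setminus\{0\})>0$. Then the power series in $g$ \[ \sum_{n=0}^\infty\frac1{n!}\Bigl(\frac{-ig(t-t_0)}{\hbar}\Bigr)^n\int_{[0,1]^n}\int_{\mathbb{R}^n}\exp\Bigl\{-\frac{\hbar}{2M}(t-t_0)\sum_{j,k=1}^n\alpha_j\alpha_k(\sigma_j\sigma_k-\sigma_j\wedge\sigma_k)\Bigr\}\exp\Bigl\{\sum_{j=1}^n\alpha_j\bigl[\sigma_jx+(1-\sigma_j)x_0\bigr]\Bigr\}\prod_{j=1}^ndm(\alpha_j)\,d^n\sigma \] diverges for every $g\neq0$.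
   Context: $\sigma_j\wedge\sigma_k=\min(\sigma_j,\sigma_k)$. This series is the formal perturbation series (normalized by the free kernel) obtained from the Schr\''odinger propagator with potential $gV(x)=g\int e^{\alpha x}dm(\alpha)$ by analytic continuation of the mass $M\mapsto iM$, formally solving the heat equation with potential $-igV$. *)

From HB Require Import structures.
From mathcomp Require Import all_boot all_order all_algebra.
From mathcomp Require Import all_classical all_reals all_analysis.
From mathcomp Require Import complex.

Set Implicit Arguments.
Unset Strict Implicit.
Unset Printing Implicit Defensive.

Import Order.TTheory GRing.Theory Num.Theory.
Import numFieldNormedType.Exports.
Local Open Scope classical_set_scope.
Local Open Scope ring_scope.
Local Open Scope complex_scope.

(* Iterated integral  \int_{D} ... \int_{D} f(x_1,...,x_k) dmu(x_1)...dmu(x_k)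
   of a nonnegative extended-real function of k variables (collected as a list
   [:: x_1; ...; x_k]); for nonnegative measurable integrands this is the
   integral against the k-fold product measure (Tonelli). *)
Fixpoint iter_int d (T : measurableType d) (R : realType)
  (mu : {measure set T -> \bar R}) (D : set T) (k : nat)
  (f : seq T -> \bar R) {struct k} : \bar R :=
  match k with
  | 0 => f [::]
  | k'.+1 => (\int[mu]_(y in D) iter_int mu D k' (fun s => f (y :: s)))%E
  end.

Definition integrand (R : realType) (hbar M t t0 x x0 : R)
  (alpha sigma : seq R) : R :=
  let n := size alpha in
  expR (- (hbar / (2 * M)) * (t - t0) *
        \sum_(j < n) \sum_(k < n)
          alpha`_j * alpha`_k * (sigma`_j * sigma`_k - Num.min sigma`_j sigma`_k))
  * expR (\sum_(j < n) alpha`_j * (sigma`_j * x + (1 - sigma`_j) * x0)).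

Definition I_n (R : realType) (m : {measure set R -> \bar R})
  (hbar M t t0 x x0 : R) (n : nat) : \bar R :=
  iter_int (@lebesgue_measure R) `[0, 1] n (fun sigma =>
    iter_int m setT n (fun alpha => (integrand hbar M t t0 x x0 alpha sigma)%:E)).

Definition term (R : realType) (m : {measure set R -> \bar R})
  (hbar M t t0 x x0 : R) (g : R[i]) (n : nat) : R[i] :=
  (n`!%:R)^-1 * (- 'i * g * ((t - t0) / hbar)%:C) ^+ n
  * (fine (I_n m hbar M t t0 x x0 n))%:C.

Definition cvgC (R : realType) (u : nat -> R[i]) : Prop :=
  exists l : R[i],
    (fun n => complex.Re (u n)) @ \oo --> complex.Re l /\
    (fun n => complex.Im (u n)) @ \oo --> complex.Im l.

Definition series_converges (R : realType) (m : {measure set R -> \bar R})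
  (hbar M t t0 x x0 : R) (g : R[i]) : Prop :=
  (forall n, (I_n m hbar M t t0 x x0 n < +oo)%E) /\
  cvgC (fun N => \sum_(n < N) term m hbar M t t0 x x0 g n).

(* Restrict the integrals to sigma_j in [1/4, 3/4] and to alpha_j in a set A of
   positive m-measure on which alpha_j alpha_k >= e^2 and |alpha_j| <= L (such a set
   exists because m charges R \ {0}).  There
   sigma_j sigma_k - min(sigma_j, sigma_k) = min * (max - 1) <= -1/16, so the Gaussian
   factor is at least exp(kappa n^2) with kappa = hbar (t - t0) e^2 / (32 M), while the
   linear exponent is at least -n L (|x| + |x0|).  Hence I_n >= (c exp(kappa n))^n for
   some c > 0, and the n-th term of the series has modulus at least
   (rho exp(kappa n))^n / n! >= n^n / n! >= 1 for large n: the terms do not tend to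
   zero. *)

From HB Require Import structures.
From mathcomp Require Import all_boot all_order all_algebra.
From mathcomp Require Import all_classical all_reals all_analysis.
From mathcomp Require Import complex.
From mathcomp Require Import ring lra.
Set Implicit Arguments.
Unset Strict Implicit.
Unset Printing Implicit Defensive.

Import Order.TTheory GRing.Theory Num.Theory.
Import numFieldNormedType.Exports.
Local Open Scope classical_set_scope.
Local Open Scope ring_scope.
Import HBNNSimple.

Section iterated_integral_lower_bound.
Context d (T : measurableType d) (R : realType) (mu : {measure set T -> \bar R}).
Local Open Scope ereal_scope.

Lemma integral_ge_mul_measure (D A : set T) (f : T -> \bar R) (c : R) :
  measurable (A `&` D) -> (0 <= c)%R -> (forall y, D y -> 0 <= f y) ->
  (forall y, A y -> D y -> c%:E <= f y) ->
  c%:E * mu (A `&` D) <= \int[mu]_(y in D) f y.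
Proof.
move=> mAD c0 f0 fc; rewrite ge0_integralE//.
pose h := mul_nnsfun (cst_nnsfun T (NngNum c0)) (indic_nnsfun R mAD).
have -> : c%:E * mu (A `&` D) = sintegral mu h.
  by rewrite sintegralrM -sintegral_indic.
apply: ereal_sup_ubound; exists h => //= y.
rewrite /patch /= measurable_realfun.mindicE /indic /=.
case: (boolP (y \in A `&` D)) => [|_].
  by rewrite mulr1 in_setI => /andP[/set_mem Ay /set_mem Dy]; rewrite mem_set // fc.
by rewrite mulr0; case: ifP => // /set_mem Dy; exact: f0.
Qed.

Lemma iter_int_ge0 (D : set T) k (f : seq T -> \bar R) :
  (forall s, 0 <= f s) -> 0 <= iter_int mu D k f.
Proof.
elim: k f => [|k IH] f f0 /=; first exact: f0.
by apply: integral_ge0 => y _; apply: IH.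
Qed.

Lemma iter_int_ge_mul_expr (D A : set T) k (f : seq T -> \bar R) (K del : R) :
  measurable (A `&` D) -> (0 <= K)%R -> (0 <= del)%R -> del%:E <= mu (A `&` D) ->
  (forall s, 0 <= f s) ->
  (forall s, size s = k -> (forall y, y \in s -> (A `&` D) y) -> K%:E <= f s) ->
  (K * del ^+ k)%:E <= iter_int mu D k f.
Proof.
move=> mAD K0 del0 del_le.
elim: k f => [|k IH] f f0 fK /=; first by rewrite expr0 mulr1; exact: fK.
have Kdel0 : (0 <= K * del ^+ k)%R by rewrite mulr_ge0 // exprn_ge0.
apply: (le_trans _ (integral_ge_mul_measure mAD Kdel0 _ _)).
- by rewrite exprSr mulrA EFinM lee_pmul // lee_fin.
- by move=> y _; exact: iter_int_ge0.
move=> y Ay Dy; apply: IH => [s|s sz sAD]; first exact: f0.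
apply: fK => [|z]; first by rewrite /= sz.
by rewrite inE => /orP[/eqP->|/sAD].
Qed.

End iterated_integral_lower_bound.

Lemma mul_sub_minr_le (R : realFieldType) (s u : R) :
  1/4 <= s <= 3/4 -> 1/4 <= u <= 3/4 -> s * u - Num.min s u <= - (1/16).
Proof.
move=> /andP[s1 s2] /andP[u1 u2]; rewrite /Num.min; case: ifP => _.
  have : 0 <= (s - 1/4) * (3/4 - u) by apply: mulr_ge0; lra.
  lra.
have : 0 <= (u - 1/4) * (3/4 - s) by apply: mulr_ge0; lra.
lra.
Qed.

Lemma quadratic_form_le (R : realFieldType) (n : nat) (a s : nat -> R) (e : R) :
  (forall j k, (j < n)%N -> (k < n)%N -> e ^+ 2 <= a j * a k) ->
  (forall j, (j < n)%N -> 1/4 <= s j <= 3/4) ->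
  \sum_(j < n) \sum_(k < n) a j * a k * (s j * s k - Num.min (s j) (s k))
    <= - (e ^+ 2 / 16) * n%:R ^+ 2.
Proof.
move=> ae s_bd.
apply: (@le_trans _ _ (\sum_(j < n) \sum_(k < n) - (e ^+ 2 / 16))); last first.
  rewrite !sumr_const !card_ord.
  by rewrite -natrX [in leRHS]mulr_natr expnSr expn1 mulrnA.
apply: ler_sum => j _; apply: ler_sum => k _.
have ajk := ae _ _ (ltn_ord j) (ltn_ord k).
have Q_le := mul_sub_minr_le (s_bd _ (ltn_ord j)) (s_bd _ (ltn_ord k)).
have e0 : 0 <= e ^+ 2 by rewrite sqr_ge0.
set P := a j * a k in ajk *; set Q := _ - _ in Q_le *.
have : 0 <= (P - e ^+ 2) * (- Q) by apply: mulr_ge0; lra.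
have : 0 <= e ^+ 2 * (- Q - 1/16) by apply: mulr_ge0; lra.
lra.
Qed.

Lemma linear_form_ge (R : realFieldType) (n : nat) (a s : nat -> R) (L x x0 : R) :
  (forall j, (j < n)%N -> `|a j| <= L) ->
  (forall j, (j < n)%N -> 0 <= s j <= 1) ->
  - (n%:R * (L * (`|x| + `|x0|)))
    <= \sum_(j < n) a j * (s j * x + (1 - s j) * x0).
Proof.
move=> a_bd s_bd.
have -> : - (n%:R * (L * (`|x| + `|x0|))) = \sum_(j < n) - (L * (`|x| + `|x0|)).
  by rewrite sumr_const card_ord mulr_natl mulNrn.
apply: ler_sum => j _; rewrite lerNl (le_trans (ler_norm _)) //.
have /andP[s0 s1] := s_bd _ (ltn_ord j).
rewrite normrN normrM ler_pM // ?a_bd // (le_trans (ler_normD _ _)) //.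
rewrite !normrM (ger0_norm s0) [`|1 - _|]ger0_norm ?subr_ge0 //.
by apply: lerD; apply: ler_piMl => //; lra.
Qed.

Lemma integrand_ge0 (R : realType) (hbar M t t0 x x0 : R) (alpha sigma : seq R) :
  0 <= integrand hbar M t t0 x x0 alpha sigma.
Proof. by rewrite /integrand mulr_ge0 ?expR_ge0. Qed.

Lemma integrand_ge (R : realType) (hbar M t t0 x x0 e L : R) (A : set R)
    (alpha sigma : seq R) :
  0 < hbar -> 0 < M -> t0 < t ->
  (forall a b, A a -> A b -> e ^+ 2 <= a * b) -> (forall a, A a -> `|a| <= L) ->
  (forall j, (j < size alpha)%N -> A alpha`_j) ->
  (forall j, (j < size alpha)%N -> 1/4 <= sigma`_j <= 3/4) ->
  (expR (hbar / (2 * M) * (t - t0) * e ^+ 2 / 16 * (size alpha)%:R)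
     * expR (- (L * (`|x| + `|x0|)))) ^+ size alpha
    <= integrand hbar M t t0 x x0 alpha sigma.
Proof.
move=> hbar0 M0 tt0 Ae AL alphaA sigma_bd; rewrite /integrand.
set n := size alpha; set c := hbar / (2 * M) * (t - t0).
have c0 : 0 < c by rewrite /c mulr_gt0 ?divr_gt0 ?mulr_gt0 ?subr_gt0.
rewrite exprMn -!expRM_natl ler_pM ?expR_ge0 // ler_expR.
- have := quadratic_form_le (fun j k jn kn => Ae _ _ (alphaA j jn) (alphaA k kn))
    sigma_bd.
  set S := \sum_(j < n) _ => S_le.
  have : c * S <= c * (- (e ^+ 2 / 16) * n%:R ^+ 2) by rewrite ler_wpM2l // ltW.
  by rewrite !mulNr -/c; lra.
- rewrite mulrN; apply: linear_form_ge => [j jn|j jn]; first exact: AL (alphaA j jn).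
  by have /andP[s1 s2] := sigma_bd j jn; apply/andP; split; lra.
Qed.

Section positive_measure.
Context d (T : measurableType d) (R : realType) (mu : {measure set T -> \bar R}).
Local Open Scope ereal_scope.

Lemma measure_bigcup_gt0 (A : set T) (F : nat -> set T) :
  (forall k, measurable (F k)) -> measurable A -> A `<=` \bigcup_k F k ->
  0 < mu A -> exists k, 0 < mu (F k).
Proof.
move=> mF mA AF muA; apply: contrapT => /forallNP F0.
have {}F0 k : mu (F k) = 0.
  by apply/eqP; rewrite eq_le measure_ge0 andbT leNgt; apply/negP; exact: F0.
move: muA; rewrite lt_neqAle => /andP[/eqP + _]; apply; apply/eqP.
rewrite eq_le measure_ge0 /=.
have -> : 0 = \sum_(0 <= k <oo) mu (F k) by rewrite eseries0 // => k _ _.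
exact: measure_sigma_subadditive.
Qed.

Lemma measureU_gt0 (A B : set T) : measurable A -> measurable B ->
  0 < mu (A `|` B) -> 0 < mu A \/ 0 < mu B.
Proof.
move=> mA mB AB0; have := lt_le_trans AB0 (measureU2 mu mA mB).
case: (ltP 0 (mu A)) => [|A0]; first by left.
move=> AB; right; apply: (lt_le_trans AB).
by rewrite -[leRHS]add0e leeD.
Qed.

End positive_measure.

Lemma setC0_subset_annuli (R : realType) :
  ~` [set 0 : R] `<=` \bigcup_k ([set` `[(k.+1%:R)^-1, k.+1%:R]] `|`
                                 [set` `[- k.+1%:R, - (k.+1%:R)^-1]]).
Proof.
move=> a /eqP a0; have a_gt0 : 0 < `|a| by rewrite normr_gt0.
exists (Num.truncn (`|a| + `|a|^-1)) => //.
set k := Num.truncn _; have := truncnS_gt (`|a| + `|a|^-1); rewrite -/k => k_gt.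
have inva_gt0 : 0 < `|a|^-1 by rewrite invr_gt0.
have a_lt : `|a| < k.+1%:R by lra.
have inv_le : (k.+1%:R)^-1 <= `|a|.
  by rewrite -[`|a|]invrK lef_pV2 ?posrE //; lra.
rewrite /= !in_itv /=; case: (ltP 0 a) => [a_pos|a_neg].
  by left; rewrite -(gtr0_norm a_pos) inv_le ltW.
have {}a_neg : a < 0 by rewrite lt_neqAle a0.
by right; rewrite -[a]opprK -(ltr0_norm a_neg) !lerN2 inv_le ltW.
Qed.

Lemma itv_mul_ge_sqr (R : realFieldType) (e L a b : R) : 0 <= e ->
  a \in `[e, L] -> b \in `[e, L] -> e ^+ 2 <= a * b.
Proof.
rewrite !in_itv /= => e0 /andP[a1 _] /andP[b1 _].
by rewrite expr2 ler_pM.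
Qed.

Lemma itv_norm_le (R : realFieldType) (e L a : R) : 0 <= e ->
  a \in `[e, L] -> `|a| <= L.
Proof. by rewrite in_itv /= => e0 /andP[a1 a2]; rewrite ger0_norm // (le_trans e0). Qed.

Lemma exists_set_bounded_away_from0 (R : realType) (m : {measure set R -> \bar R}) :
  (0 < m (~` [set 0%R]))%E ->
  exists (A : set R) (e L : R), [/\ measurable A, (0 < m A)%E, 0 < e,
    (forall a b, A a -> A b -> e ^+ 2 <= a * b) & (forall a, A a -> `|a| <= L)].
Proof.
move=> m0.
have m_annuli k : measurable ([set` `[(k.+1%:R : R)^-1, k.+1%:R]] `|`
                               [set` `[- k.+1%:R, - (k.+1%:R : R)^-1]]).
  by apply: measurableU; exact: measurable_itv.
have mC0 : measurable (~` [set 0 : R]).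
  by apply: measurableC; exact: measurable_set1.
have [k] := measure_bigcup_gt0 m_annuli mC0 (@setC0_subset_annuli R) m0.
set e := (k.+1%:R : R)^-1; set L := (k.+1%:R : R).
have e0 : 0 < e by rewrite invr_gt0.
case/measureU_gt0; try exact: measurable_itv.
  move=> pos; exists [set` `[e, L]], e, L; split => //.
  - by move=> a b; apply: itv_mul_ge_sqr; exact: ltW.
  - by move=> a; apply: itv_norm_le; exact: ltW.
move=> neg; exists [set` `[- L, - e]], e, L; split => //.
- move=> a b /= a_in b_in; rewrite -mulrNN.
  by apply: (@itv_mul_ge_sqr _ e L) (ltW e0) _ _; rewrite oppr_itvcc.
- move=> a /= a_in; rewrite -normrN.
  by apply: (@itv_norm_le _ e L) (ltW e0) _; rewrite oppr_itvcc.
Qed.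

Lemma fact_leq_expnn n : (n`! <= n ^ n)%N.
Proof.
elim: n => [//|n IH]; rewrite factS expnS leq_mul //.
by apply: (leq_trans IH); case: n {IH} => // n; rewrite leq_exp2r.
Qed.

Lemma natr_le_mul_expR (R : realType) (rho kap : R) : 0 < rho -> 0 < kap ->
  \forall n \near \oo, n%:R <= rho * expR (kap * n%:R).
Proof.
move=> rho0 kap0; set c := rho * kap ^+ 2 / 2.
have c0 : 0 < c by rewrite divr_gt0 // mulr_gt0 // exprn_gt0.
exists (Num.truncn c^-1).+1 => // n /= Nn.
have n0 : 0 < n%:R :> R by rewrite ltr0n (leq_trans _ Nn).
have cn : 1 <= c * n%:R.
  have : c^-1 < n%:R.
    by rewrite (lt_le_trans (truncnS_gt _)) // ler_nat.
  by rewrite -(ltr_pM2l c0) mulfV ?gt_eqF // => /ltW.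
have := expR_ge1Dxn 1 (ltW (mulr_gt0 kap0 n0)).
rewrite -(ler_pM2l rho0) => /(le_trans _); apply.
have : n%:R <= c * n%:R * n%:R by rewrite ler_peMl // ltW.
have -> : 2`!%:R = 2 :> R by [].
by rewrite /c !expr2; nra.
Qed.

Lemma mul_expR_expr_div_fact_ge1 (R : realType) (rho kap : R) :
  0 < rho -> 0 < kap ->
  \forall n \near \oo, 1 <= (rho * expR (kap * n%:R)) ^+ n / n`!%:R.
Proof.
move=> rho0 kap0; near=> n.
rewrite ler_pdivlMr ?ltr0n ?fact_gt0 // mul1r.
apply: (@le_trans _ _ (n%:R ^+ n)); first by rewrite -natrX ler_nat fact_leq_expnn.
apply: lerXn2r; rewrite ?nnegrE ?mulr_ge0 ?expR_ge0 //; first exact: ltW.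
by near: n; exact: natr_le_mul_expR rho0 kap0.
Unshelve. all: by end_near.
Qed.

Section complex_modulus.
Variable R : realType.
Local Notation normc := (@Normc.normc R).
Local Open Scope complex_scope.

Lemma normc_sqr (w : R[i]) : normc w ^+ 2 = complex.Re w ^+ 2 + complex.Im w ^+ 2.
Proof. by case: w => a b /=; rewrite sqr_sqrtr // addr_ge0 // sqr_ge0. Qed.

Lemma Re_sum (u : nat -> R[i]) N :
  complex.Re (\sum_(n < N) u n) = \sum_(n < N) complex.Re (u n).
Proof. by apply: big_morph => // -[a b] [c d]. Qed.

Lemma Im_sum (u : nat -> R[i]) N :
  complex.Im (\sum_(n < N) u n) = \sum_(n < N) complex.Im (u n).
Proof. by apply: big_morph => // -[a b] [c d]. Qed.

Lemma cvg_partial_sums_cvg0 (v : nat -> R) (l : R) :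
  (fun N => \sum_(n < N) v n) @ \oo --> l -> v @ \oo --> 0.
Proof.
move=> cv; apply: cvg_series_cvg_0; apply/cvg_ex; exists l.
by apply: cvg_trans cv; apply: near_eq_cvg; near=> N; rewrite /series /= big_mkord.
Unshelve. all: by end_near.
Qed.

Lemma cvgC_partial_sums_normc_lt1 (u : nat -> R[i]) :
  cvgC (fun N => \sum_(n < N) u n) -> \forall n \near \oo, normc (u n) < 1.
Proof.
case=> l [cvRe cvIm].
have Re0 : (fun n => complex.Re (u n)) @ \oo --> 0.
  by apply: (@cvg_partial_sums_cvg0 _ (complex.Re l)); under eq_fun do rewrite -Re_sum.
have Im0 : (fun n => complex.Im (u n)) @ \oo --> 0.
  by apply: (@cvg_partial_sums_cvg0 _ (complex.Im l)); under eq_fun do rewrite -Im_sum.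
have half0 : (0 : R) < 1/2 by lra.
near=> n.
have : `|complex.Re (u n)| < 1/2 by near: n; exact: cvgr0_norm_lt.
have : `|complex.Im (u n)| < 1/2 by near: n; exact: cvgr0_norm_lt.
rewrite !ltr_norml => /andP[a1 a2] /andP[b1 b2].
have : normc (u n) ^+ 2 < 1 by rewrite normc_sqr; nra.
have : 0 <= normc (u n) by case: (u n) => a b; exact: sqrtr_ge0.
nra.
Unshelve. all: by end_near.
Qed.

Lemma normcX (w : R[i]) n : normc (w ^+ n) = normc w ^+ n.
Proof.
elim: n => [|n IH]; first by rewrite !expr0 Normc.normc1.
by rewrite !exprS Normc.normcM IH.
Qed.

Lemma normc_real (r : R) : normc r%:C = `|r|.
Proof. by rewrite /= expr0n /= addr0 sqrtr_sqr. Qed.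

Lemma normc_natr n : normc n%:R = n%:R.
Proof. by rewrite normcMn Normc.normc1. Qed.

Lemma normcNi : normc (- 'i) = 1.
Proof. by rewrite /= oppr0 expr0n /= add0r sqrrN expr1n sqrtr1. Qed.

Lemma normc_gt0 (w : R[i]) : w != 0 -> 0 < normc w.
Proof.
move=> w0; rewrite lt_neqAle eq_sym; apply/andP; split.
  by apply: contra w0 => /eqP/Normc.eq0_normc ->.
by case: w {w0} => a b; exact: sqrtr_ge0.
Qed.

End complex_modulus.

Lemma I_n_ge0 (R : realType) (m : {measure set R -> \bar R}) (hbar M t t0 x x0 : R) n :
  (0 <= I_n m hbar M t t0 x x0 n)%E.
Proof. by do 2 apply: iter_int_ge0 => ?; rewrite lee_fin integrand_ge0. Qed.

Lemma normc_term (R : realType) (m : {measure set R -> \bar R})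
    (hbar M t t0 x x0 : R) (g : R[i]) n :
  0 < hbar -> t0 < t ->
  Normc.normc (term m hbar M t t0 x x0 g n) =
  (n`!%:R)^-1 * (Normc.normc g * ((t - t0) / hbar)) ^+ n
  * fine (I_n m hbar M t t0 x x0 n).
Proof.
move=> hbar0 tt0; have tau0 : 0 <= (t - t0) / hbar by rewrite divr_ge0 ?subr_ge0 ?ltW.
rewrite /term !Normc.normcM Normc.normcV normc_natr normcX !Normc.normcM normcNi.
by rewrite !normc_real mul1r (ger0_norm tau0) ger0_norm // fine_ge0 // I_n_ge0.
Qed.

Lemma ereal_gt0_ge_EFin (R : realType) (y : \bar R) :
  (0 < y)%E -> exists r : R, 0 < r /\ (r%:E <= y)%E.
Proof.
case: y => [r r0| |] //; first by exists r.
by exists 1; split; [exact: ltr01 | exact: leey].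
Qed.

Lemma I_n_ge (R : realType) (m : {measure set R -> \bar R})
    (hbar M t t0 x x0 e L dm : R) (A : set R) n :
  0 < hbar -> 0 < M -> t0 < t ->
  measurable A -> 0 <= dm -> (dm%:E <= m A)%E ->
  (forall a b, A a -> A b -> e ^+ 2 <= a * b) -> (forall a, A a -> `|a| <= L) ->
  (((expR (hbar / (2 * M) * (t - t0) * e ^+ 2 / 16 * n%:R)
       * expR (- (L * (`|x| + `|x0|)))) ^+ n * dm ^+ n * (1/2) ^+ n)%:E
    <= I_n m hbar M t t0 x x0 n)%E.
Proof.
move=> hbar0 M0 tt0 mA dm0 dm_le Ae AL; rewrite /I_n.
have itv_quarters : [set` `[1/4, 3/4]] `&` `[0, 1] = [set` `[1/4, 3/4] : interval R].
  by apply: setIidl => y /=; rewrite !in_itv /= => /andP[? ?]; apply/andP; lra.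
apply: (@iter_int_ge_mul_expr _ _ _ (@lebesgue_measure R) `[0, 1]
  [set` `[(1/4 : R), 3/4]] n _ (_ ^+ n * dm ^+ n) (1/2)); rewrite ?itv_quarters.
- exact: measurable_itv.
- by rewrite mulr_ge0 ?exprn_ge0 ?mulr_ge0 ?expR_ge0.
- lra.
- have itv_len : lebesgue_measure [set` `[(1/4 : R), 3/4]] = (3/4 - 1/4)%:E.
    by rewrite lebesgue_measure_itv /= lte_fin ifT //; lra.
  apply: (@le_trans _ _ ((3/4 - 1/4 : R)%:E)); first by rewrite lee_fin; lra.
  by rewrite -itv_len.
- by move=> s; apply: iter_int_ge0 => ?; rewrite lee_fin integrand_ge0.
move=> s sz s_in; apply: (iter_int_ge_mul_expr (A := A)); rewrite ?setIT //.
  by move=> ?; rewrite lee_fin integrand_ge0.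
move=> alpha alpha_sz alpha_in; rewrite lee_fin -alpha_sz.
apply: (integrand_ge x x0 hbar0 M0 tt0 Ae AL) => j jn.
- by apply: alpha_in; exact: mem_nth.
- by apply: s_in; rewrite mem_nth // sz -alpha_sz.
Qed.

Theorem mainTheorem4 (R : realType) (hbar M : R) (x x0 t0 t : R)
  (m : {measure set R -> \bar R}) :
  0 < hbar -> 0 < M -> t0 < t ->
  (forall C : R, 0 < C ->
     (\int[m]_(a in [set: R]) (expR (C * `|a|))%:E < +oo)%E) ->
  (0 < m (~` [set 0%R]))%E ->
  forall g : R[i], g != 0 -> ~ series_converges m hbar M t t0 x x0 g.
Proof.
move=> hbar0 M0 tt0 _ m0 g g0 [I_fin cv].
have [A [e [L [mA mA0 e0 Ae AL]]]] := exists_set_bounded_away_from0 m0.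
have [dm [dm0 dm_le]] := ereal_gt0_ge_EFin mA0.
set kap := hbar / (2 * M) * (t - t0) * e ^+ 2 / 16.
set rho := Normc.normc g * ((t - t0) / hbar)
           * (expR (- (L * (`|x| + `|x0|))) * dm / 2).
have kap0 : 0 < kap.
  rewrite /kap divr_gt0 // mulr_gt0 ?exprn_gt0 //.
  by rewrite mulr_gt0 ?subr_gt0 // divr_gt0 // mulr_gt0.
have tau0 : 0 < (t - t0) / hbar by rewrite divr_gt0 // subr_gt0.
have rho0 : 0 < rho.
  rewrite /rho mulr_gt0 ?(mulr_gt0 (normc_gt0 g0) tau0) //.
  by rewrite divr_gt0 // mulr_gt0 ?expR_gt0.
have [n [small big]] := filter_ex (filterI (cvgC_partial_sums_normc_lt1 cv)
  (mul_expR_expr_div_fact_ge1 rho0 kap0)).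
suff : 1 <= Normc.normc (term m hbar M t t0 x x0 g n) by rewrite leNgt small.
rewrite (le_trans big) // normc_term //.
have := I_n_ge x x0 n hbar0 M0 tt0 mA (ltW dm0) dm_le Ae AL.
rewrite -[I_n _ _ _ _ _ _ _ _]fineK ?ge0_fin_numE ?I_fin ?I_n_ge0 // lee_fin => I_ge.
apply: le_trans (ler_wpM2l _ I_ge).
  by rewrite le_eqVlt; apply: predU1l; rewrite /rho /kap !exprMn expr1n; ring.
by rewrite mulr_ge0 ?invr_ge0 // exprn_ge0 // mulr_ge0 // ltW // normc_gt0.
Qed.
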